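(* Let $\frac12<p<1$ and let $f:\mathbb{Z}^+\to[0,\infty)$ be monotonically increasing (non-decreasing). Let $\{N_j\}_{j\ge0}$ be the discrete-time, time-inhomogeneous Markov chain on $\mathbb{N}$ with $N_0=1$, $N_1\sim\mathrm{Bern}\big(\frac{1-p}{p}\big)$, and, for $j\ge1$, conditionally on $N_j$, $N_{j+1}\sim\mathrm{Bin}\big(N_j,\frac{1-p}{p}\big)+\mathrm{Poiss}\big(\frac{1-p}{p}f(j)\big)$ with independent summands. Let $\mathbf{P}^*$ denote its law and $K=\#\{j\in\mathbb{Z}^+:N_j=0\}$. If $$\sum_{j=1}^{\infty}e^{-\frac{1-p}{2p-1}f(j)}<\infty,$$ then $\mathbf{P}^*(K<\infty)=1$. *)

From HB Require Import structures.
From mathcomp Require Import all_boot all_order all_algebra.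
From mathcomp Require Import all_classical all_reals all_analysis.
Set Implicit Arguments. Unset Strict Implicit. Unset Printing Implicit Defensive.
Import Order.TTheory GRing.Theory Num.Theory.
Import numFieldNormedType.Exports.
Local Open Scope ring_scope.
Local Open Scope classical_set_scope.

Definition binom_pmf {R : realType} (n : nat) (q : R) (k : nat) : R :=
  ('C(n, k))%:R * q ^+ k * (1 - q) ^+ (n - k).

Definition poisson_pmf {R : realType} (l : R) (k : nat) : R :=
  expR (- l) * l ^+ k / (k`!)%:R.

(* Transition probability P(N_{j+1} = b | N_j = a) of the chain.
   j = 0 : N_1 ~ Bern((1-p)/p) (the chain starts at N_0 = 1).
   j >= 1 : Bin(a, (1-p)/p) + Poiss((1-p)/p * f j), independent summands
   (law = convolution of the two pmfs). *)
Definition trans {R : realType} (p : R) (f : nat -> R) (j a b : nat) : R :=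
  let q := (1 - p) / p in
  if j == 0%N then
    (if b == 0%N then 1 - q else if b == 1%N then q else 0)
  else \sum_(k < b.+1) binom_pmf a q k * poisson_pmf (q * f j) (b - k)%N.

Definition is_chain {R : realType} (p : R) (f : nat -> R)
  {d : measure_display} {T : measurableType d}
  (P : probability T R) (N : nat -> T -> nat) : Prop :=
  (forall j, measurable_fun setT (N j)) /\
  forall (n : nat) (a : nat -> nat),
    P [set w | forall i, (i <= n)%N -> N i w = a i] =
    (((a 0%N == 1%N)%:R * \prod_(i < n) trans p f i (a i) (a i.+1)) : R)%:E.

(* Write q = (1-p)/p, so that 0 < q < 1, and c = q/(1-q) = (1-p)/(2p-1).
   The generating function of Bin(a, q) + Poiss(l) at y is
   (1 - q + q y)^a exp(-l (1 - y)).  Hence, for a fixed j, the functions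
     g_i(b) = (1 - q^(j-i))^b exp(- sum_(i <= k < j) f k q^(j-k))
   satisfy E[g_(i+1)(N_(i+1)) | N_i = b] = g_i(b) for 0 < i < j, and
   g_j(b) = [b = 0]; going backwards from time j to time 1 gives
   P(N_j = 0) <= exp(- sum_(1 <= k < j) f k q^(j-k)).  Keeping only the terms
   with k > j/2, where f k >= f(j/2) by monotonicity, and summing the geometric
   weights bounds this by e (exp(-c f(j/2)) + q^(j/2)), which is summable in j;
   the first Borel-Cantelli lemma concludes. *)

From Pilot Require Import Defs.
From HB Require Import structures.
From mathcomp Require Import all_boot all_order all_algebra.
From mathcomp Require Import all_classical all_reals all_analysis.
Import Order.TTheory GRing.Theory Num.Theory.
Import numFieldNormedType.Exports.
Local Open Scope ring_scope.
Local Open Scope classical_set_scope.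
From mathcomp Require Import ring lra zify.
(* all_analysis also exports a [poisson_pmf]; the one of Defs must take precedence. *)
Import Defs.
Set Implicit Arguments. Unset Strict Implicit. Unset Printing Implicit Defensive.

Section series.
Variable R : realType.
Local Open Scope ereal_scope.

Lemma eseries_EFin (u : nat -> R) : cvgn (series u) ->
  \sum_(k <oo) (u k)%:E = (limn (series u))%:E.
Proof.
by move=> cu; rewrite -EFin_lim //; apply/congr_lim/funext => n /=; rewrite sumEFin.
Qed.

Lemma nneseries_conv_finsupp (c g : nat -> R) (a : nat) :
  (forall k, (0 <= c k)%R) -> (forall m, (0 <= g m)%R) ->
  (forall k, (a < k)%N -> c k = 0%R) ->
  \sum_(b <oo) (\sum_(k < b.+1) c k * g (b - k)%N)%:E =
  (\sum_(k < a.+1) c k)%:E * \sum_(m <oo) (g m)%:E.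
Proof.
move=> c0 g0 ca.
pose h k b := (if (k <= b)%N then c k * g (b - k)%N else 0)%R.
have h0 k b : (0 <= h k b)%R by rewrite /h; case: ifP => // _; exact: mulr_ge0.
have conv_h b : (\sum_(k < b.+1) c k * g (b - k)%N = \sum_(k < a.+1) h k b)%R.
  rewrite (big_ord_widen (a + b).+1 (fun k => c k * g (b - k)%N)%R) ?ltnS ?leq_addl //.
  rewrite (big_ord_widen (a + b).+1 (h^~ b)) ?ltnS ?leq_addr //.
  rewrite big_mkcond [RHS]big_mkcond; apply: eq_bigr => k _ /=; rewrite /h !ltnS.
  by case: (leqP k b) => // _; case: (leqP k a) => // /ca ->; rewrite mul0r.
have shift k : \sum_(b <oo) (h k b)%:E = (c k)%:E * \sum_(m <oo) (g m)%:E.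
  rewrite (@nneseries_split _ (fun b => (h k b)%:E) 0 k); last by move=> b _; rewrite lee_fin.
  rewrite add0n big_nat_cond big1 ?add0e; last first.
    by move=> b /andP[/andP[_ bk] _]; rewrite /h /= leqNgt bk.
  rewrite -nneseries_addn; last by move=> b; rewrite lee_fin.
  rewrite -nneseriesZl; last by move=> m _; rewrite lee_fin.
  by apply: eq_eseriesr => m _; rewrite /h /= leq_addl addnK EFinM.
transitivity (\sum_(b <oo) \sum_(k < a.+1) (h k b)%:E).
  by apply: eq_eseriesr => b _; rewrite conv_h sumEFin.
rewrite nneseries_sum; last by move=> k b _; rewrite lee_fin.
under eq_bigr do rewrite shift.
by rewrite -ge0_sume_distrl ?sumEFin // => k _; rewrite lee_fin.
Qed.

Lemma nneseries_half_le (w : nat -> \bar R) : (forall k, 0 <= w k) ->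
  \sum_(n <oo) w (n./2) <= \sum_(k <oo) (w k + w k).
Proof.
move=> w0.
have sum_double K : \sum_(0 <= n < K.*2) w (n./2) = \sum_(0 <= k < K) (w k + w k).
  elim: K => [|K IH]; first by rewrite !big_geq.
  by rewrite doubleS !big_nat_recr //= IH doubleK uphalf_double addeA.
apply: lime_le; first by apply: is_cvg_nneseries => n _ _; exact: w0.
apply: nearW => K; apply: le_trans (_ : \sum_(0 <= n < K.*2) w (n./2) <= _).
  rewrite -addnn [leRHS](big_cat_nat _ (n := K)) ?leq_addr //= leeDl //.
  by apply: sume_ge0 => n _; exact: w0.
by rewrite sum_double; apply: nneseries_lim_ge => n _ _; exact: adde_ge0.
Qed.

End series.

Section generating_functions.
Variable R : realType.

Lemma binom_pmf_ge0 a (q : R) k : 0 <= q <= 1 -> 0 <= binom_pmf a q k.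
Proof.
by case/andP=> q0 q1; rewrite /binom_pmf !mulr_ge0 ?exprn_ge0 ?subr_ge0.
Qed.

Lemma poisson_pmf_ge0 (l : R) k : 0 <= l -> 0 <= poisson_pmf l k.
Proof. by move=> l0; rewrite /poisson_pmf !mulr_ge0 ?expR_ge0 ?exprn_ge0. Qed.

Lemma binom_pgf a (q y : R) :
  \sum_(k < a.+1) binom_pmf a q k * y ^+ k = (1 - q + q * y) ^+ a.
Proof.
rewrite exprDn; apply: eq_bigr => k _.
by rewrite /binom_pmf -mulr_natl exprMn; ring.
Qed.

Lemma poisson_pgf (l y : R) : 0 <= l -> 0 <= y ->
  (\sum_(m <oo) (poisson_pmf l m * y ^+ m)%:E = (expR (- (l * (1 - y))))%:E)%E.
Proof.
move=> l0 y0.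
have -> : - (l * (1 - y)) = - l + l * y by ring.
have expE : (\sum_(m <oo) ((l * y) ^+ m / m`!%:R)%:E = (expR (l * y))%:E)%E.
  exact: eseries_EFin (is_cvg_series_exp_coeff _).
rewrite expRD EFinM -expE -nneseriesZl.
  by apply: eq_eseriesr => m _; rewrite /poisson_pmf exprMn; congr (_%:E); ring.
by move=> m _; rewrite lee_fin divr_ge0 ?exprn_ge0 ?mulr_ge0.
Qed.

Lemma binom_poisson_pgf a (q l y : R) : 0 <= q <= 1 -> 0 <= l -> 0 <= y ->
  (\sum_(b <oo) ((\sum_(k < b.+1) binom_pmf a q k * poisson_pmf l (b - k)%N) * y ^+ b)%:E
  = ((1 - q + q * y) ^+ a * expR (- (l * (1 - y))))%:E)%E.
Proof.
move=> q01 l0 y0.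
rewrite EFinM -binom_pgf -poisson_pgf //.
rewrite -(@nneseries_conv_finsupp _ (fun k => binom_pmf a q k * y ^+ k)
  (fun m => poisson_pmf l m * y ^+ m)).
- apply: eq_eseriesr => b _; rewrite big_distrl /=; congr (_%:E).
  apply: eq_bigr => k _.
  have kb : (k <= b)%N := ltn_ord k.
  by rewrite -[X in y ^+ X](subnKC kb) exprD; ring.
- by move=> k; rewrite mulr_ge0 ?binom_pmf_ge0 ?exprn_ge0.
- by move=> m; rewrite mulr_ge0 ?poisson_pmf_ge0 ?exprn_ge0.
- by move=> k ak; rewrite /binom_pmf bin_small // !mul0r.
Qed.

End generating_functions.

Lemma probability1_setIl d (T : measurableType d) (R : realType)
    (P : probability T R) (A B : set T) :
  measurable A -> measurable B -> P A = 1%E -> P (A `&` B) = P B.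
Proof.
move=> mA mB PA1.
have PAc0 : P (~` A) = 0%E by rewrite probability_setC // PA1 subee.
rewrite (measureDI P mB mA) setIC (@subset_measure0 _ _ _ P (B `\` A) (~` A)) ?add0e //.
- exact: measurableD.
- exact: measurableC.
Qed.

Definition cylinder {T : Type} (N : nat -> T -> nat) n (a : nat -> nat) : set T :=
  [set w | forall i, (i <= n)%N -> N i w = a i].

Definition extend (a : nat -> nat) n b : nat -> nat :=
  fun i => if i == n then b else a i.

Definition weighted_tail {R : realType} (q : R) (f : nat -> R) (i j : nat) : R :=
  \sum_(i <= k < j) f k * q ^+ (j - k).

(* The probability P(N_j = 0 | N_i = b) of the chain, for 0 < i <= j. *)
Definition zero_prob {R : realType} (q : R) (f : nat -> R) (i j b : nat) : R :=
  (1 - q ^+ (j - i)) ^+ b * expR (- weighted_tail q f i j).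

Section transition.
Variables (R : realType) (p : R) (f : nat -> R).
Local Notation q := ((1 - p) / p).
Hypothesis q01 : 0 <= q <= 1.
Hypothesis f_ge0 : forall k, (0 < k)%N -> 0 <= f k.

Let q_ge0 : 0 <= q. Proof. by case/andP: q01. Qed.
Let q_le1 : q <= 1. Proof. by case/andP: q01. Qed.

Lemma trans_ge0 i a b : 0 <= trans p f i a b.
Proof.
rewrite /trans; case: eqP => [_|/eqP i0].
  by case: ifP => _; rewrite ?subr_ge0 //; case: ifP.
apply: sumr_ge0 => k _; rewrite mulr_ge0 ?binom_pmf_ge0 ?poisson_pmf_ge0 //.
by rewrite mulr_ge0 ?f_ge0 ?lt0n.
Qed.

Lemma nneseries_trans0 a : (\sum_(b <oo) (trans p f 0 a b)%:E = 1)%E.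
Proof.
rewrite (nneseries_split 0 2); last by move=> b _; rewrite lee_fin trans_ge0.
rewrite add0n eseries0 ?adde0; last by move=> [|[|b]].
by rewrite !big_nat_recr //= big_geq // add0e /trans /= -EFinD subrK.
Qed.

Lemma zero_prob_ge0 i j b : 0 <= zero_prob q f i j b.
Proof. by rewrite mulr_ge0 ?expR_ge0 // exprn_ge0 // subr_ge0 exprn_ile1. Qed.

Lemma zero_prob_le i j b : zero_prob q f i j b <= expR (- weighted_tail q f i j).
Proof.
rewrite ler_piMl ?expR_ge0 // exprn_ile1 // ?subr_ge0 ?exprn_ile1 //.
by rewrite lerBlDr lerDl exprn_ge0.
Qed.

Lemma zero_probxx j b : zero_prob q f j j b = (b == 0%N)%:R.
Proof.
by rewrite /zero_prob /weighted_tail subnn expr0 subrr expr0n big_geq // oppr0 expR0 mulr1.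
Qed.

Lemma zero_prob_harmonic i j a : (0 < i < j)%N ->
  (\sum_(b <oo) (trans p f i a b * zero_prob q f i.+1 j b)%:E =
   (zero_prob q f i j a)%:E)%E.
Proof.
case/andP=> i0 ij; set y := 1 - q ^+ (j - i.+1).
have y0 : 0 <= y by rewrite subr_ge0 exprn_ile1.
transitivity ((expR (- weighted_tail q f i.+1 j))%:E * \sum_(b <oo)
  ((\sum_(k < b.+1) binom_pmf a q k * poisson_pmf (q * f i) (b - k)) * y ^+ b)%:E)%E.
  rewrite -nneseriesZl; last first.
    move=> b _; rewrite lee_fin mulr_ge0 ?exprn_ge0 // sumr_ge0 // => k _.
    by rewrite mulr_ge0 ?binom_pmf_ge0 ?poisson_pmf_ge0 // mulr_ge0 // f_ge0.
  apply: eq_eseriesr => b _.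
  by rewrite /trans /= (gtn_eqF i0) /zero_prob -/y -EFinM; congr (_%:E); ring.
have qf0 : 0 <= q * f i by rewrite mulr_ge0 // f_ge0.
rewrite binom_poisson_pgf // -EFinM /zero_prob; congr (_%:E).
have ji : (j - i = (j - i.+1).+1)%N by lia.
rewrite [weighted_tail q f i j]/weighted_tail big_ltn // -/(weighted_tail q f i.+1 j).
rewrite ji exprS.
have -> : 1 - q + q * y = 1 - q * q ^+ (j - i.+1) by rewrite /y; ring.
have -> : q * f i * (1 - y) = f i * (q * q ^+ (j - i.+1)) by rewrite /y; ring.
by rewrite [in RHS]opprD expRD; ring.
Qed.

Variables (d : measure_display) (T : measurableType d) (P : probability T R)
  (N : nat -> T -> nat).
Hypothesis chainN : is_chain p f P N.
Local Open Scope ereal_scope.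

Lemma measurable_level j b : measurable (N j @^-1` [set b]).
Proof. by rewrite -[X in measurable X]setTI; apply: chainN.1. Qed.

Lemma measurable_cylinder n a : measurable (cylinder N n a).
Proof.
have -> : cylinder N n a = \bigcap_(i in `I_n.+1) N i @^-1` [set a i].
  by apply/seteqP; split => w cw i /cw.
by apply: bigcap_measurableType => i _; exact: measurable_level.
Qed.

Lemma P_cylinder n a : P (cylinder N n a) =
  (((a 0%N == 1%N)%:R * \prod_(i < n) trans p f i (a i) (a i.+1)) : R)%:E.
Proof. exact: chainN.2. Qed.

Lemma P_cylinder_extend n a b :
  P (cylinder N n.+1 (extend a n.+1 b)) = P (cylinder N n a) * (trans p f n (a n) b)%:E.
Proof.
rewrite !P_cylinder -EFinM big_ord_recr /= /extend /= !eqxx (ltn_eqF (ltnSn n)).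
congr (_%:E); rewrite mulrA; congr (_ * _ * _)%R.
apply: eq_bigr => i _; have ltin := ltn_ord i.
by rewrite !ifN_eq //; apply/eqP; lia.
Qed.

Lemma cylinder_setI_le_step i (Z : set T) (G : nat -> R) :
  measurable Z -> (forall b, (0 <= G b)%R) ->
  (forall a, P (cylinder N i.+1 a `&` Z) <= P (cylinder N i.+1 a) * (G (a i.+1))%:E) ->
  forall a, P (cylinder N i a `&` Z) <=
    P (cylinder N i a) * \sum_(b <oo) (trans p f i (a i) b * G b)%:E.
Proof.
move=> mZ G0 HG a.
have cover : cylinder N i a `&` Z `<=` \bigcup_b (cylinder N i.+1 (extend a i.+1 b) `&` Z).
  move=> w [cw Zw]; exists (N i.+1 w) => //; split => // k.
  rewrite /extend leq_eqVlt ltnS => /orP[/eqP -> | ki]; first by rewrite eqxx.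
  by rewrite ifN_eq ?cw //; apply/eqP; lia.
apply: le_trans (measure_sigma_subadditive P _ _ cover) _.
- by move=> b; apply: measurableI => //; exact: measurable_cylinder.
- by apply: measurableI => //; exact: measurable_cylinder.
rewrite P_cylinder -nneseriesZl; last by move=> b _; rewrite lee_fin mulr_ge0 ?trans_ge0.
apply: lee_nneseries => [b _ _|b _]; first exact: measure_ge0.
apply: le_trans (HG _) _.
by rewrite /extend eqxx P_cylinder_extend P_cylinder -!EFinM mulrA.
Qed.

Lemma cylinder_setI_zero_le j i a : (0 < i <= j)%N ->
  P (cylinder N i a `&` N j @^-1` [set 0%N]) <=
  P (cylinder N i a) * (zero_prob q f i j (a i))%:E.
Proof.
case/andP=> + ij; elim: (j - i)%N {-2}i (erefl (j - i)%N) ij a => [|k IH] {}i ki ij a i0.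
  have <- : i = j by lia.
  rewrite zero_probxx; case: eqP => [ai0|/eqP ai0].
    by rewrite mule1; apply: measureIl; [exact: measurable_cylinder|exact: measurable_level].
  rewrite mule0 (_ : _ `&` _ = set0) ?measure0 //; apply/seteqP; split => // w [cw].
  by rewrite /= cw // => /eqP; rewrite (negbTE ai0).
have iij : (0 < i < j)%N by rewrite i0; lia.
rewrite -(zero_prob_harmonic (a i) iij).
apply: cylinder_setI_le_step => [|b|{}a]; first exact: measurable_level.
  exact: zero_prob_ge0.
by apply: IH => //; lia.
Qed.

Lemma P_zero_le j : (0 < j)%N ->
  P (N j @^-1` [set 0%N]) <= (expR (- weighted_tail q f 1 j))%:E.
Proof.
move=> j0; pose one : nat -> nat := fun=> 1%N.
have P_one : P (cylinder N 0 one) = 1 by rewrite P_cylinder big_ord0 mulr1.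
rewrite -(probability1_setIl (measurable_cylinder 0 one) (measurable_level j 0) P_one).
have := @cylinder_setI_le_step 0 _ (zero_prob q f 1 j) (measurable_level j 0)
  (zero_prob_ge0 1 j) (fun a => @cylinder_setI_zero_le j 1 a j0) one.
rewrite P_one mul1e => /le_trans; apply.
apply: le_trans (_ : \sum_(b <oo) ((expR (- weighted_tail q f 1 j))%:E *
  (trans p f 0 1 b)%:E) <= _).
  apply: lee_nneseries => [b _ _|b _]; first by rewrite lee_fin mulr_ge0 ?trans_ge0 ?zero_prob_ge0.
  by rewrite -EFinM lee_fin mulrC ler_wpM2r ?trans_ge0 ?zero_prob_le.
by rewrite nneseriesZl ?nneseries_trans0 ?mule1 // => b _; rewrite lee_fin trans_ge0.
Qed.

End transition.

Section real_bounds.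
Variable R : realType.

(* If x e <= 1 the factor expR (x e) is at most e; otherwise x > 1/e and
   expR (- x (1 - e)) <= expR (1 - 1/e) <= expR 1 * e. *)
Lemma expRN_mul_subr_le (x e : R) : 0 <= x -> 0 < e <= 1 ->
  expR (- (x * (1 - e))) <= expR 1 * (expR (- x) + e).
Proof.
move=> x0 /andP[e0 e1].
have [xe|xe] := lerP (x * e) 1.
  have -> : - (x * (1 - e)) = - x + x * e by ring.
  by rewrite expRD mulrC ler_pM ?expR_ge0 ?ler_expR // lerDl ltW.
have hx : 1 / e < x by rewrite ltr_pdivrMr.
apply: le_trans (_ : expR (1 - 1 / e) <= _).
  have -> : 1 - 1 / e = - (1 / e * (1 - e)) by field; rewrite gt_eqF.
  by rewrite ler_expR lerN2 ler_wpM2r ?subr_ge0 // ltW.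
rewrite expRD ler_pM2l ?expR_gt0 //; apply: le_trans (_ : e <= _); last first.
  by rewrite lerDr expR_ge0.
have AB : expR (- (1 / e)) * expR (1 / e) = 1 by rewrite -expRD addNr expR0.
have eB : 1 <= e * expR (1 / e).
  apply: le_trans (_ : e * (1 + 1 / e) <= _); last by rewrite ler_pM2l ?expR_ge1Dx.
  by rewrite mulrDr mulr1 mulrA mulr1 divff ?gt_eqF // lerDr ltW.
have := expR_ge0 (- (1 / e)); nra.
Qed.

Lemma geometric_tail_sum (q : R) m L :
  (\sum_(m <= k < m + L) q ^+ (m + L - k)) * (1 - q) = q * (1 - q ^+ L).
Proof.
elim: L => [|L IH]; first by rewrite addn0 big_geq // mul0r expr0 subrr mulr0.
rewrite addnS big_nat_recr /= ?leq_addr // subSn // subnn expr1.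
rewrite (eq_big_nat _ _ (F2 := fun k => q * q ^+ (m + L - k))); last first.
  by move=> k /andP[_ kl]; rewrite subSn ?exprS // ltnW.
by rewrite -big_distrr /= mulrDl -mulrA IH exprS; ring.
Qed.

Lemma weighted_tail_ge (q : R) (f : nat -> R) m j : 0 <= q -> (0 < m <= j)%N ->
  (forall k, (0 < k)%N -> 0 <= f k) ->
  (forall i k, (0 < i)%N -> (i <= k)%N -> f i <= f k) ->
  f m * \sum_(m <= k < j) q ^+ (j - k) <= weighted_tail q f 1 j.
Proof.
move=> q0 /andP[m0 mj] f0 fm.
rewrite /weighted_tail [leRHS](big_cat_nat _ (n := m)) //=; apply: ler_wpDl.
  by rewrite big_nat_cond sumr_ge0 // => k /andP[/andP[k1 _] _]; rewrite mulr_ge0 ?f0 ?exprn_ge0.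
rewrite big_distrr /= big_nat_cond [leRHS]big_nat_cond.
by apply: ler_sum => k /andP[/andP[mk _] _]; rewrite ler_wpM2r ?exprn_ge0 ?fm.
Qed.

End real_bounds.

Lemma finite_set_nat_ub (A : set nat) : finite_set A -> exists n, forall k, A k -> (k < n)%N.
Proof.
move=> /finite_fsetP[X ->]; exists (\max_(x <- finmap.enum_fset X) x)%N.+1 => k kX.
by rewrite ltnS; exact: (leq_bigmax_seq (F := id)).
Qed.

Lemma finite_set_lim_supC (T : Type) (E : nat -> set T) :
  [set w | finite_set [set j | (0 < j)%N /\ E j w]] = ~` lim_sup_set (fun n => E n.+2).
Proof.
apply/seteqP; split => w /=.
  move=> /finite_set_nat_ub[n hn] wE; have [k /= nk Ekw] := wE n I.
  by have := hn k.+2 (conj isT Ekw); lia.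
move=> wE; have [n hn] : exists n, forall k, (n <= k)%N -> ~ E k.+2 w.
  apply: contrapT => hne; apply: wE => n _.
  move/forallNP/(_ n)/existsNP: hne => [k /not_implyP[nk /contrapT Ekw]].
  by exists k.
apply: (sub_finite_set (B := `I_n.+2)); last exact: finite_II.
move=> j [j0 Ejw] /=; case: (ltnP j n.+2) => // jn.
have j2 : j = (j - 2).+2 by lia.
by rewrite j2 in Ejw; case: (hn _ _ Ejw); lia.
Qed.

Section extinction.
Variables (R : realType) (p : R) (f : nat -> R).
Hypotheses (p_gt_half : 1 / 2 < p) (p_lt1 : p < 1).
Hypothesis f_ge0 : forall k, (0 < k)%N -> 0 <= f k.
Hypothesis f_mono : forall i k, (0 < i)%N -> (i <= k)%N -> f i <= f k.
Local Notation q := ((1 - p) / p).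
Local Notation c := ((1 - p) / (2 * p - 1)).

Let p_gt0 : 0 < p. Proof. by apply: lt_trans p_gt_half; rewrite divr_gt0. Qed.
Let q_gt0 : 0 < q. Proof. by rewrite divr_gt0 // subr_gt0. Qed.
Let q_lt1 : q < 1. Proof. by rewrite ltr_pdivrMr // mul1r; have := p_gt_half; lra. Qed.
Let q01 : 0 <= q <= 1. Proof. by rewrite !ltW. Qed.

Lemma weighted_tail_expR_le n :
  expR (- weighted_tail q f 1 n.+2) <= expR 1 * (expR (- (c * f (n./2).+1)) + q ^+ n./2).
Proof.
(* [lra] ignores section hypotheses. *)
have p_gt := p_gt_half.
set h := n./2; set L := (n.+2 - h.+1)%N.
have hh : (h + h <= n)%N by rewrite /h addnn -{2}(odd_double_half n) leq_addl.
have hL : (h.+1 + L = n.+2)%N by rewrite /L; lia.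
have cq : c = q / (1 - q) by field; lra.
have geo : \sum_(h.+1 <= k < n.+2) q ^+ (n.+2 - k) = q * (1 - q ^+ L) / (1 - q).
  by rewrite -hL -(geometric_tail_sum q h.+1) mulfK // subr_eq0 gt_eqF.
have cf0 : 0 <= c * f h.+1.
  by rewrite mulr_ge0 ?f_ge0 // cq divr_ge0 ?subr_ge0 ?(ltW q_gt0) ?(ltW q_lt1).
have mid : (0 < h.+1 <= n.+2)%N by lia.
have tail := weighted_tail_ge (ltW q_gt0) mid f_ge0 f_mono.
apply: le_trans (_ : expR (- (c * f h.+1 * (1 - q ^+ L))) <= _).
  rewrite ler_expR lerN2; apply: le_trans tail; rewrite geo cq.
  rewrite [leRHS](_ : _ = q / (1 - q) * f h.+1 * (1 - q ^+ L)) ?lexx //.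
  by field; lra.
apply: le_trans (expRN_mul_subr_le cf0 _) _; first by rewrite exprn_gt0 // exprn_ile1 ?ltW.
by rewrite ler_pM2l ?expR_gt0 // lerD2l ler_wiXn2l ?ltW //; lia.
Qed.

Variables (d : measure_display) (T : measurableType d) (P : probability T R)
  (N : nat -> T -> nat).
Hypothesis chainN : is_chain p f P N.
Local Open Scope ereal_scope.

Lemma nneseries_P_zero_lt_pinfty :
  cvgn (series (fun k => expR (- (c * f k.+1)))) ->
  \sum_(n <oo) P (N n.+2 @^-1` [set 0%N]) < +oo.
Proof.
move=> summable_f.
have sum_u : \sum_(k <oo) (expR (- (c * f k.+1)))%:E < +oo.
  by rewrite eseries_EFin // ltry.
have sum_q : \sum_(k <oo) (q ^+ k)%:E < +oo.
  rewrite (eq_eseriesr (g := fun k => (geometric 1 q k)%:E)); last first.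
    by move=> k _; rewrite /geometric /= mul1r.
  rewrite eseries_EFin ?ltry //; apply: is_cvg_geometric_series.
  by rewrite ger0_norm ?ltW.
pose w k := (expR (- (c * f k.+1)))%:E + (q ^+ k)%:E.
have w0 k : 0 <= w k by rewrite adde_ge0 // lee_fin ?expR_ge0 ?exprn_ge0 ?ltW.
have sum_w : \sum_(k <oo) w k < +oo.
  rewrite nneseriesD; first exact: lte_add_pinfty.
  - by move=> k _ _; rewrite lee_fin expR_ge0.
  - by move=> k _ _; rewrite lee_fin exprn_ge0 ?ltW.
apply: (@le_lt_trans _ _ (\sum_(n <oo) ((expR 1)%:E * w (n./2)))).
  apply: lee_nneseries => [n _ _|n _]; first exact: measure_ge0.
  apply: le_trans (P_zero_le q01 f_ge0 chainN (ltn0Sn n.+1)) _.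
  by rewrite /w -EFinD -EFinM lee_fin weighted_tail_expR_le.
rewrite nneseriesZl // lte_mul_pinfty ?lee_fin ?expR_ge0 //.
apply: le_lt_trans (nneseries_half_le w0) _.
by rewrite nneseriesD // lte_add_pinfty.
Qed.

End extinction.

Unset Implicit Arguments. Set Strict Implicit. Set Printing Implicit Defensive.
Theorem proposition8 (R : realType) (p : R) (f : nat -> R)
  (d : measure_display) (T : measurableType d)
  (P : probability T R) (N : nat -> T -> nat) :
  1 / 2 < p -> p < 1 ->
  (forall j, (0 < j)%N -> 0 <= f j) ->
  (forall i j, (0 < i)%N -> (i <= j)%N -> f i <= f j) ->
  is_chain p f P N ->
  cvgn (series (fun j : nat => expR (- ((1 - p) / (2 * p - 1) * f j.+1)))) ->
  P [set w | finite_set [set j : nat | (0 < j)%N /\ N j w = 0%N]] = 1%E.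
Proof.
move=> p_gt_half p_lt1 f_ge0 f_mono chainN summable_f.
have mZ n : measurable (N n.+2 @^-1` [set 0%N]) := measurable_level chainN _ _.
have mL : measurable (lim_sup_set (fun n => N n.+2 @^-1` [set 0%N])).
  by apply: bigcapT_measurable => k; apply: bigcup_measurable => i _; exact: mZ.
rewrite (finite_set_lim_supC (fun j => N j @^-1` [set 0%N])) probability_setC //.
rewrite (lim_sup_set_cvg0 mZ) ?sube0 //.
exact: (nneseries_P_zero_lt_pinfty p_gt_half p_lt1 f_ge0 f_mono chainN summable_f).
Qed.
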